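(* Let $T$ be a prae-dilator and let $(X,\iota_X,L_X)$ be a Bachmann-Howard system for $T$. Then the relation $<_{\vartheta_T(X)}$ is a (strict) linear order on $\vartheta_T(X)$.
   Context: The finite subset functor $[\cdot]^{<\omega}$ sends a set $X$ to the set of its finite subsets and a function $f$ to $[f]^{<\omega}(a)=\{f(x)\mid x\in a\}$; subsets of linear orders are regarded as suborders. A prae-dilator consists of an endofunctor $X\mapsto T_X$ on the category of linear orders (morphisms: order embeddings) and a natural transformation $\operatorname{supp}^T:T\Rightarrow[\cdot]^{<\omega}$ such that for every linear order $X$ and every $\sigma\in T_X$ we have $\sigma\in\operatorname{rng}(T_{\iota_\sigma})$, where $\iota_\sigma:\operatorname{supp}^T_X(\sigma)\hookrightarrow X$ is the inclusion. For a linear order $Z$ and finite $a,b\subseteq Z$ write $a<^{\operatorname{fin}}_Z b$ iff for every $s\in a$ there is $t\in b$ with $s<_Z t$; $\leq^{\operatorname{fin}}_Z$ is defined analogously with $\leq_Z$; singletons $\{s\}$ are written $s$. For a linear order $X$ let $\vartheta_T(X)$ be the set of formal terms $\vartheta\sigma$ with $\sigma\in T_X$. A Bachmann-Howard system (for $T$) is a triple $(X,\iota_X,L_X)$ with $X$ a linear order, $\iota_X:X\to\vartheta_T(X)$ and $L_X:X\to\omega$ functions, such that $L_{\vartheta_T(X)}\circ\iota_X=L_X$, where $L_{\vartheta_T(X)}(\vartheta\sigma):=\max\{L_X(x)\mid x\in\operatorname{supp}^T_X(\sigma)\}+1$ (maximum of the empty set is $0$). For such a system the relation $\vartheta\sigma<_{\vartheta_T(X)}\vartheta\tau$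 is defined by recursion on $L_{\vartheta_T(X)}(\vartheta\sigma)+L_{\vartheta_T(X)}(\vartheta\tau)$ to hold iff either (a) $\sigma<_{T_X}\tau$ and $[\iota_X]^{<\omega}(\operatorname{supp}^T_X(\sigma))<^{\operatorname{fin}}_{\vartheta_T(X)}\vartheta\tau$, or (b) $\tau<_{T_X}\sigma$ and $\vartheta\sigma\leq^{\operatorname{fin}}_{\vartheta_T(X)}[\iota_X]^{<\omega}(\operatorname{supp}^T_X(\tau))$. (Here $\leq_{\vartheta_T(X)}$ means $<_{\vartheta_T(X)}$ or equality of terms; the recursion is well-defined since $L_{\vartheta_T(X)}(\iota_X(x))<L_{\vartheta_T(X)}(\vartheta\sigma)$ for $x\in\operatorname{supp}^T_X(\sigma)$.) *)

From Stdlib Require Import List ProofIrrelevance.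
Set Implicit Arguments.

Record LinOrd : Type := {
  carrier :> Type;
  lt : carrier -> carrier -> Prop;
  lt_irrefl : forall x, ~ lt x x;
  lt_trans : forall x y z, lt x y -> lt y z -> lt x z;
  lt_total : forall x y, lt x y \/ x = y \/ lt y x
}.
Arguments lt {l} _ _.

Record Emb (X Y : LinOrd) : Type := {
  emb :> X -> Y;
  emb_mono : forall a b, lt a b -> lt (emb a) (emb b)
}.

Definition id_emb (X : LinOrd) : Emb X X :=
  {| emb := fun x => x; emb_mono := fun a b h => h |}.

Definition comp_emb (X Y Z : LinOrd) (f : Emb X Y) (g : Emb Y Z) : Emb X Z :=
  {| emb := fun x => g (f x);
     emb_mono := fun a b h => emb_mono g _ _ (emb_mono f _ _ h) |}.

Definition finite_pred (A : Type) (P : A -> Prop) : Prop :=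
  exists l : list A, forall x, P x <-> In x l.

Section Sub.
Variable (X : LinOrd) (P : X -> Prop).
Definition sub_lt (a b : {x : X | P x}) : Prop := lt (proj1_sig a) (proj1_sig b).
Lemma sub_irrefl : forall a, ~ sub_lt a a.
Proof. intros a; apply lt_irrefl. Qed.
Lemma sub_trans : forall a b c, sub_lt a b -> sub_lt b c -> sub_lt a c.
Proof. intros a b c; apply lt_trans. Qed.
Lemma sub_total : forall a b, sub_lt a b \/ a = b \/ sub_lt b a.
Proof.
  intros [a pa] [b pb]; unfold sub_lt; simpl.
  destruct (lt_total X a b) as [h|[h|h]]; auto.
  right; left; subst b; f_equal; apply proof_irrelevance.
Qed.
Definition sub_lo : LinOrd :=
  {| carrier := {x : X | P x}; lt := sub_lt;
     lt_irrefl := sub_irrefl; lt_trans := sub_trans; lt_total := sub_total |}.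
Definition incl_emb : Emb sub_lo X :=
  {| emb := fun a : sub_lo => proj1_sig a; emb_mono := fun a b h => h |}.
End Sub.

Record PraeDilator : Type := {
  T :> LinOrd -> LinOrd;
  Tmap : forall X Y : LinOrd, Emb X Y -> Emb (T X) (T Y);
  Tmap_id : forall (X : LinOrd) (s : T X), Tmap (id_emb X) s = s;
  Tmap_comp : forall (X Y Z : LinOrd) (f : Emb X Y) (g : Emb Y Z) (s : T X),
      Tmap (comp_emb f g) s = Tmap g (Tmap f s);
  supp : forall X : LinOrd, T X -> X -> Prop;
  supp_finite : forall (X : LinOrd) (s : T X), finite_pred (supp X s);
  supp_natural : forall (X Y : LinOrd) (f : Emb X Y) (s : T X) (y : Y),
      supp Y (Tmap f s) y <-> exists x, supp X s x /\ f x = y;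
  supp_condition : forall (X : LinOrd) (s : T X),
      exists s0 : T (sub_lo X (supp X s)), Tmap (incl_emb X (supp X s)) s0 = s
}.

Inductive theta (D : PraeDilator) (X : LinOrd) : Type :=
| vartheta : D X -> theta D X.
Arguments vartheta {D X} _.

(** [is_max0 P f m]: m = max { f a | P a }, with max of the empty set = 0. *)
Definition is_max0 (A : Type) (P : A -> Prop) (f : A -> nat) (m : nat) : Prop :=
  (forall a, P a -> f a <= m) /\ (m = 0 \/ exists a, P a /\ f a = m).

Definition Ltheta_is (D : PraeDilator) (X : LinOrd) (L : X -> nat)
    (t : theta D X) (n : nat) : Prop :=
  match t with
  | vartheta s => exists m, is_max0 (supp D X s) L m /\ n = S m
  end.

Arguments Ltheta_is : clear implicits.

Definition is_BH_system (D : PraeDilator) (X : LinOrd)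
    (iota : X -> theta D X) (L : X -> nat) : Prop :=
  forall x : X, Ltheta_is D X L (iota x) (L x).

(** The relation <_{theta_T(X)}: the recursive clauses (a) and (b), taken as
    an inductive (least) relation; clause (b) is split according to the two
    cases of <= (equality of terms, or <). *)
Inductive theta_lt (D : PraeDilator) (X : LinOrd) (iota : X -> theta D X)
  : theta D X -> theta D X -> Prop :=
| theta_lt_a : forall s t : D X,
    lt s t ->
    (forall x, supp D X s x -> theta_lt iota (iota x) (vartheta t)) ->
    theta_lt iota (vartheta s) (vartheta t)
| theta_lt_b_eq : forall (s t : D X) (y : X),
    lt t s -> supp D X t y -> vartheta s = iota y ->
    theta_lt iota (vartheta s) (vartheta t)
| theta_lt_b_lt : forall (s t : D X) (y : X),
    lt t s -> supp D X t y -> theta_lt iota (vartheta s) (iota y) ->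
    theta_lt iota (vartheta s) (vartheta t).

Arguments theta_lt : clear implicits.
Arguments is_BH_system : clear implicits.

Definition strict_linear_order (A : Type) (R : A -> A -> Prop) : Prop :=
  (forall a, ~ R a a) /\
  (forall a b c, R a b -> R b c -> R a c) /\
  (forall a b, R a b \/ a = b \/ R b a).

From Stdlib Require Import List Lia Arith Classical ClassicalEpsilon.

Set Implicit Arguments.
Unset Strict Implicit.

(* Both clauses compare [σ] and [τ] strictly in [T_X], which gives
   irreflexivity at once.  Transitivity and trichotomy follow by induction on
   the sum of the heights [L_{ϑ_T(X)}] of the terms compared: every comparison
   that a clause refers to replaces some [ϑσ] by a term [ι_X x] with
   [x ∈ supp σ], and the Bachmann-Howard condition makes its height
   [L_X x] smaller than that of [ϑσ].  For trichotomy, excluded middle decides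
   whether clause (a) applies; if it fails at some [x], the induction
   hypothesis for [ι_X x] yields clause (b) in the other direction. *)

Section Max0.
Variables (A : Type) (f : A -> nat).

Lemma is_max0_In (l : list A) : exists m, is_max0 (fun a => In a l) f m.
Proof.
  induction l as [|x l [m [Hle Hm]]].
  - exists 0; split; [intros a []|now left].
  - exists (Nat.max (f x) m); split.
    + intros a [<-|Ha]; [lia|specialize (Hle a Ha); lia].
    + right; destruct (Nat.max_spec (f x) m) as [[Hlt ->]|[_ ->]].
      * destruct Hm as [->|[a [Ha <-]]]; [lia|exists a; split; [right|]; auto].
      * exists x; split; [left|]; auto.
Qed.

Lemma finite_pred_is_max0 (P : A -> Prop) : finite_pred P -> exists m, is_max0 P f m.
Proof.
  intros [l Hl]; destruct (is_max0_In l) as [m [Hle Hm]].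
  exists m; split.
  - intros a Ha; apply Hle, Hl, Ha.
  - destruct Hm as [->|[a [Ha <-]]]; [now left|right; exists a; split; [apply Hl|]; auto].
Qed.

Lemma is_max0_unique (P : A -> Prop) m m' : is_max0 P f m -> is_max0 P f m' -> m = m'.
Proof.
  intros [Hle [->|[a [Ha <-]]]] [Hle' [->|[a' [Ha' <-]]]]; auto.
  - specialize (Hle a' Ha'); lia.
  - specialize (Hle' a Ha); lia.
  - specialize (Hle a' Ha'); specialize (Hle' a Ha); lia.
Qed.

End Max0.

Section Height.
Variables (D : PraeDilator) (X : LinOrd) (L : X -> nat).

Lemma Ltheta_is_total (a : theta D X) : exists n, Ltheta_is D X L a n.
Proof.
  destruct a as [s]; destruct (finite_pred_is_max0 L (supp_finite D X s)) as [m Hm].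
  now exists (S m), m.
Qed.

Lemma Ltheta_is_functional a n n' :
  Ltheta_is D X L a n -> Ltheta_is D X L a n' -> n = n'.
Proof.
  destruct a; intros [m [Hm ->]] [m' [Hm' ->]].
  now rewrite (is_max0_unique Hm Hm').
Qed.

(* The support is only propositionally finite, so the height is chosen by
   description rather than computed. *)
Definition height (a : theta D X) : nat :=
  proj1_sig (constructive_indefinite_description _ (Ltheta_is_total a)).

Lemma height_spec a : Ltheta_is D X L a (height a).
Proof. exact (proj2_sig (constructive_indefinite_description _ (Ltheta_is_total a))). Qed.

Lemma supp_lt_height s x : supp D X s x -> L x < height (vartheta s).
Proof.
  intros Hx; destruct (height_spec (vartheta s)) as [m [[Hle _] ->]].
  specialize (Hle x Hx); lia.
Qed.

End Height.

Section ThetaOrder.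
Variables (D : PraeDilator) (X : LinOrd) (iota : X -> theta D X) (L : X -> nat).
Hypothesis HBH : is_BH_system D X iota L.

Local Notation tlt := (theta_lt D X iota).
Local Notation tle a b := (a = b \/ tlt a b).
Local Notation ht := (height L).

Lemma theta_lt_irrefl a : ~ tlt a a.
Proof. intros H; inversion H; subst; eapply lt_irrefl; eauto. Qed.

Lemma theta_lt_inv r s : tlt (vartheta r) (vartheta s) ->
  (lt r s /\ forall x, supp D X r x -> tlt (iota x) (vartheta s)) \/
  (lt s r /\ exists y, supp D X s y /\ tle (vartheta r) (iota y)).
Proof. intros H; inversion H; subst; eauto 6. Qed.

Lemma theta_lt_b r s y :
  lt s r -> supp D X s y -> tle (vartheta r) (iota y) -> tlt (vartheta r) (vartheta s).
Proof. intros Hsr Hy [He|Hlt]; [eapply theta_lt_b_eq|eapply theta_lt_b_lt]; eauto. Qed.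

Lemma height_iota_supp s x : supp D X s x -> ht (iota x) < ht (vartheta s).
Proof.
  intros Hx; rewrite (Ltheta_is_functional (height_spec L (iota x)) (HBH x)).
  now apply supp_lt_height.
Qed.

Section TransStep.
Variables r s t : D X.
Hypothesis IH : forall a b c,
  ht a + ht b + ht c < ht (vartheta r) + ht (vartheta s) + ht (vartheta t) ->
  tlt a b -> tlt b c -> tlt a c.

Lemma lt_le_trans_below a b c :
  ht a + ht b + ht c < ht (vartheta r) + ht (vartheta s) + ht (vartheta t) ->
  tlt a b -> tle b c -> tlt a c.
Proof. intros Hn Hab [<-|Hbc]; eauto. Qed.

Lemma le_lt_trans_below a b c :
  ht a + ht b + ht c < ht (vartheta r) + ht (vartheta s) + ht (vartheta t) ->
  tle a b -> tlt b c -> tlt a c.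
Proof. intros Hn [<-|Hab] Hbc; eauto. Qed.

Lemma theta_lt_trans_step :
  tlt (vartheta r) (vartheta s) -> tlt (vartheta s) (vartheta t) ->
  tlt (vartheta r) (vartheta t).
Proof.
  intros Hrs Hst.
  destruct (theta_lt_inv Hrs) as [[rs Hr]|[sr [y [Hy Hry]]]];
    destruct (theta_lt_inv Hst) as [[st Hs]|[ts [z [Hz Hsz]]]].
  - apply theta_lt_a; [exact (lt_trans _ _ _ _ rs st)|].
    intros x Hx; apply IH with (vartheta s); auto.
    pose proof (height_iota_supp Hx); lia.
  - destruct (lt_total _ r t) as [rt|[rt|tr]].
    + apply theta_lt_a; [exact rt|].
      intros x Hx; apply IH with (vartheta s); auto.
      pose proof (height_iota_supp Hx); lia.
    + exfalso; apply (theta_lt_irrefl (a := iota z)).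
      apply lt_le_trans_below with (vartheta s); [|apply Hr; congruence|exact Hsz].
      pose proof (height_iota_supp Hz); rewrite <- rt in Hz.
      pose proof (height_iota_supp Hz); lia.
    + apply theta_lt_b with z; [exact tr|exact Hz|right].
      apply lt_le_trans_below with (vartheta s); auto.
      pose proof (height_iota_supp Hz); lia.
  - apply le_lt_trans_below with (iota y); auto.
    pose proof (height_iota_supp Hy); lia.
  - apply theta_lt_b with z; [exact (lt_trans _ _ _ _ ts sr)|exact Hz|right].
    apply lt_le_trans_below with (vartheta s); auto.
    pose proof (height_iota_supp Hz); lia.
Qed.

End TransStep.

Lemma theta_lt_trans a b c : tlt a b -> tlt b c -> tlt a c.
Proof.
  remember (ht a + ht b + ht c) as n eqn:Hn.
  revert a b c Hn; induction n as [n IH] using lt_wf_ind.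
  intros [r] [s] [t] -> ; apply theta_lt_trans_step.
  intros a b c Hlt; eapply IH; [exact Hlt|reflexivity].
Qed.

Lemma theta_lt_or_gt_of_lt r t :
  (forall a b, ht a + ht b < ht (vartheta r) + ht (vartheta t) ->
     tlt a b \/ a = b \/ tlt b a) ->
  lt r t -> tlt (vartheta r) (vartheta t) \/ tlt (vartheta t) (vartheta r).
Proof.
  intros IH rt.
  destruct (classic (forall x, supp D X r x -> tlt (iota x) (vartheta t))) as [Ha|Hb].
  - left; now apply theta_lt_a.
  - right; apply not_all_ex_not in Hb as [x Hx]; apply imply_to_and in Hx as [Hx Hnot].
    apply theta_lt_b with x; [exact rt|exact Hx|].
    pose proof (height_iota_supp Hx).
    destruct (IH (iota x) (vartheta t)) as [|[|]]; [lia|contradiction|auto|auto].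
Qed.

Lemma theta_lt_total a b : tlt a b \/ a = b \/ tlt b a.
Proof.
  remember (ht a + ht b) as n eqn:Hn.
  revert a b Hn; induction n as [n IH] using lt_wf_ind.
  intros [r] [t] ->.
  destruct (lt_total _ r t) as [rt|[<-|tr]]; [|now right; left|].
  - destruct (theta_lt_or_gt_of_lt (r := r) (t := t)); auto.
    intros a b Hlt; eapply IH; [exact Hlt|reflexivity].
  - destruct (theta_lt_or_gt_of_lt (r := t) (t := r)); auto.
    intros a b Hlt; eapply IH; [|reflexivity]; lia.
Qed.

End ThetaOrder.

Theorem lemma3p4 (D : PraeDilator) (X : LinOrd) (iota : X -> theta D X)
    (L : X -> nat) (HBH : is_BH_system D X iota L) :
  strict_linear_order (theta_lt D X iota).
Proof.
  split; [|split].
  - intros a; apply theta_lt_irrefl.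
  - exact (theta_lt_trans HBH).
  - exact (theta_lt_total HBH).
Qed.
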